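(* Let $F$ be a field of characteristic zero and let $A$ be a $\#$-superalgebra over $F$. Then for every $n\geq 1$, $$c_n^{grs}(A)\leq 4^n c_n(A).$$
   Context: All algebras are associative over $F$. A superalgebra is $A=A_0\oplus A_1$ with $A_iA_j\subseteq A_{(i+j)\bmod 2}$; $\deg a=i$ for $0\ne a\in A_i$. A superinvolution is an $F$-linear map $\#:A\to A$ with $A_i^\#\subseteq A_i$, $(c^\#)^\#=c$ and $(ab)^\#=(-1)^{\deg a\deg b}b^\#a^\#$ for homogeneous $a,b$; a graded involution is an $F$-linear map $\#$ with $A_i^\#\subseteq A_i$, $(c^\#)^\#=c$, $(ab)^\#=b^\#a^\#$. A $\#$-superalgebra is a superalgebra with a superinvolution or a graded involution $\#$. Put $A_i^{+}=\{a\in A_i:a^\#=a\}$, $A_i^-=\{a\in A_i:a^\#=-a\}$. Let $\mathcal F$ be the free non-unital associative algebra on $X=Y_0\cup Z_0\cup Y_1\cup Z_1$, $Y_i=\{y_{i,1},y_{i,2},\dots\}$, $Z_i=\{z_{i,1},z_{i,2},\dots\}$, where variables in $Y_i\cup Z_i$ have $\mathbb Z_2$-degree $i$, and $\#$ is defined by $y_{i,j}^\#=y_{i,j}$, $z_{i,j}^\#=-z_{i,j}$ and, on monomials, $(x_{i_1}\cdots x_{i_k})^\#=(-1)^{s(s-1)/2}x_{i_k}^\#\cdots x_{i_1}^\#$ ($s$ = number of odd variables) in the superinvolution case, resp. $(x_{i_1}\cdots x_{i_k})^\#=x_{i_k}^\#\cdots x_{i_1}^\#$ in the graded involution case, extended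 linearly. A polynomial $f\in\mathcal F$ is a $\#$-superidentity of $A$ if it vanishes under every substitution of variables $y_{0,j},z_{0,j},y_{1,j},z_{1,j}$ by elements of $A_0^+,A_0^-,A_1^+,A_1^-$ respectively; $Id_2^\#(A)$ is the set of these. $P_n^{grs}$ is the span of all monomials $w_{\sigma(1)}\cdots w_{\sigma(n)}$, $\sigma\in S_n$, $w_i\in\{y_{0,i},z_{0,i},y_{1,i},z_{1,i}\}$, and $c_n^{grs}(A)=\dim P_n^{grs}/(P_n^{grs}\cap Id_2^\#(A))$. $P_n$ is the space of ordinary multilinear polynomials in $x_1,\dots,x_n$, $Id(A)$ the ordinary polynomial identities of $A$, and $c_n(A)=\dim P_n/(P_n\cap Id(A))$. *)

From HB Require Import structures.
From mathcomp Require Import all_boot all_order all_algebra all_fingroup.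
From mathcomp Require Import boolp.
Set Implicit Arguments. Unset Strict Implicit. Unset Printing Implicit Defensive.
Import Order.TTheory GRing.Theory Num.Theory.
Local Open Scope ring_scope.

Section Defs.
Variable F : fieldType.

(* quotient dimension dim (V / W) where V = functions I -> F (finite basis I,
   so V = F^I) and W is a subspace given as a predicate:
   the largest m such that there are m vectors of V linearly independent
   modulo W. *)
Definition indep_mod (I : finType) (W : (I -> F) -> Prop) (m : nat) : Prop :=
  exists v : 'I_m -> I -> F,
    forall c : 'I_m -> F,
      W (fun x => \sum_(i < m) c i * v i x) -> forall i, c i = 0.

Definition quot_dim (I : finType) (W : (I -> F) -> Prop) : nat :=
  (\max_(m < #|I|.+1 | `[< indep_mod W m >]) nat_of_ord m)%N.

Variable A : lmodType F.

Definition is_assoc_algebra (mul : A -> A -> A) : Prop :=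
  [/\ forall (k : F) a b c, mul (k *: a + b) c = k *: mul a c + mul b c,
      forall (k : F) a b c, mul a (k *: b + c) = k *: mul a b + mul a c
    & forall a b c, mul a (mul b c) = mul (mul a b) c].

Fixpoint mprod (mul : A -> A -> A) (s : seq A) : A :=
  match s with
  | [::] => 0
  | [:: a] => a
  | a :: t => mul a (mprod mul t)
  end.

Definition subspace (P : A -> Prop) : Prop :=
  P 0 /\ forall (k : F) a b, P a -> P b -> P (k *: a + b).

Definition comp (A0 A1 : A -> Prop) (i : bool) : A -> Prop :=
  if i then A1 else A0.

(* A = A_0 (+) A_1 is a superalgebra; sh is a superinvolution (super = true)
   or a graded involution (super = false). *)
Definition is_sharp_superalgebra (mul : A -> A -> A) (A0 A1 : A -> Prop)
    (sh : A -> A) (super : bool) : Prop :=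
  [/\ is_assoc_algebra mul,
      subspace A0 /\ subspace A1 /\
      ((forall a, exists a0 a1, [/\ A0 a0, A1 a1 & a = a0 + a1]) /\
      (forall a, A0 a -> A1 a -> a = 0)),
      (forall i j a b, comp A0 A1 i a -> comp A0 A1 j b ->
                       comp A0 A1 (i (+) j) (mul a b)),
      (forall (k : F) a b, sh (k *: a + b) = k *: sh a + sh b) /\
      (forall i a, comp A0 A1 i a -> comp A0 A1 i (sh a)) /\
      (forall a, sh (sh a) = a)
    & if super then
        forall i j a b, comp A0 A1 i a -> comp A0 A1 j b ->
          sh (mul a b) = (-1) ^+ (i && j) *: mul (sh b) (sh a)
      else forall a b, sh (mul a b) = mul (sh b) (sh a)].

(* ordinary multilinear polynomials: f = sum_s f(s) x_{s(0)} ... x_{s(n-1)} *)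
Definition eval_P (n : nat) (mul : A -> A -> A) (f : 'S_n -> F)
    (x : 'I_n -> A) : A :=
  \sum_(s : 'S_n) f s *: mprod mul [seq x (s i) | i <- enum 'I_n].

Definition is_id_P (n : nat) (mul : A -> A -> A) (f : 'S_n -> F) : Prop :=
  forall x : 'I_n -> A, eval_P mul f x = 0.

Definition codim (n : nat) (mul : A -> A -> A) : nat :=
  quot_dim (fun f : 'S_n -> F => is_id_P mul f).

(* graded-involution/super variables: kind 0 = y_0 (A_0^+), 1 = z_0 (A_0^-),
   2 = y_1 (A_1^+), 3 = z_1 (A_1^-). *)
Definition kind_set (A0 A1 : A -> Prop) (sh : A -> A) (k : 'I_4) : A -> Prop :=
  fun a => (if (k < 2)%N then A0 a else A1 a) /\
           sh a = (if odd k then - a else a).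

(* P_n^grs: basis monomials w_{s(0)} ... w_{s(n-1)} indexed by (s, t) with
   w_i the variable of kind t(i) and index i. *)
Definition grs_index (n : nat) := ('S_n * {ffun 'I_n -> 'I_4})%type.

Definition eval_Pgrs (n : nat) (mul : A -> A -> A) (f : grs_index n -> F)
    (x : 'I_4 -> 'I_n -> A) : A :=
  \sum_(p : grs_index n)
     f p *: mprod mul [seq x (p.2 (p.1 i)) (p.1 i) | i <- enum 'I_n].

Definition is_id_Pgrs (n : nat) (mul : A -> A -> A) (A0 A1 : A -> Prop)
    (sh : A -> A) (f : grs_index n -> F) : Prop :=
  forall x : 'I_4 -> 'I_n -> A,
    (forall k i, kind_set A0 A1 sh k (x k i)) -> eval_Pgrs mul f x = 0.

Definition codim_grs (n : nat) (mul : A -> A -> A) (A0 A1 : A -> Prop)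
    (sh : A -> A) : nat :=
  quot_dim (fun f : grs_index n -> F => is_id_Pgrs mul A0 A1 sh f).

End Defs.

(* P_n^grs is the direct sum, over the 4^n ways t of assigning one of the four
   kinds y_0, z_0, y_1, z_1 to the variables, of copies of P_n.  Substituting
   the variables of kind t(i) into an ordinary multilinear identity keeps it an
   identity, so the copy of P_n \cap Id(A) sits inside Id_2^#(A) in every
   component.  Hence c_n(A) representatives of P_n modulo Id(A), placed in each
   of the 4^n components, span P_n^grs modulo Id_2^#(A). *)

From HB Require Import structures.
From mathcomp Require Import all_boot all_order all_algebra all_fingroup.
From mathcomp Require Import boolp.
Import GRing.Theory.
Set Implicit Arguments. Unset Strict Implicit. Unset Printing Implicit Defensive.
Local Open Scope ring_scope.

Lemma big_pairE (R : Type) (idx : R) (op : Monoid.com_law idx) (I J : finType)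
    (G : I * J -> R) :
  \big[op/idx]_p G p = \big[op/idx]_i \big[op/idx]_j G (i, j).
Proof. by rewrite pair_bigA; apply: eq_bigr => -[]. Qed.

Section QuotientDimension.
Variables (F : fieldType) (I : finType) (W : (I -> F) -> Prop).

Definition lincomb_closed : Prop :=
  forall (J : finType) (c : J -> F) (f : J -> I -> F),
    (forall j, W (f j)) -> W (fun x => \sum_j c j * f j x).

Definition spans_mod (J : finType) (w : J -> I -> F) : Prop :=
  forall f, exists a : J -> F, W (fun x => f x - \sum_j a j * w j x).

Hypothesis closedW : lincomb_closed.

Lemma lincomb_closed0 : W (fun _ => 0).
Proof.
have /closedW : forall j : 'I_0, W (fun _ => 0) by case.
by move/(_ (fun _ => 0)); congr W; apply: funext => x; rewrite big_ord0.
Qed.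

Lemma exists_nonzero_left_kernel m k (M : 'M[F]_(m, k)) :
  (k < m)%N -> exists2 c : 'rV_m, c != 0 & c *m M = 0.
Proof.
move=> lt_km; have : kermx M != 0.
  rewrite kermx_eq0 /row_free; apply/negP => /eqP rkM.
  by move: (rank_leq_col M); rewrite rkM leqNgt lt_km.
by case/rowV0Pn => c /sub_kermxP cM nz_c; exists c.
Qed.

Lemma indep_mod_le_span (J : finType) (w : J -> I -> F) m :
  spans_mod w -> indep_mod W m -> (m <= #|J|)%N.
Proof.
move=> /choice[coef spanW] [v indep_v]; rewrite leqNgt; apply/negP.
pose M : 'M[F]_(m, #|J|) := \matrix_(i, j) coef (v i) (enum_val j).
move=> /(exists_nonzero_left_kernel M)[c /eqP nz_c cM]; apply: nz_c.
have coef_cancel j : \sum_i c ord0 i * coef (v i) j = 0.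
  move/rowP/(_ (enum_rank j)): cM; rewrite !mxE => cMj; rewrite -[RHS]cMj.
  by apply: eq_bigr => i _; rewrite mxE enum_rankK.
have Wc : W (fun x => \sum_i c ord0 i * v i x).
  have := closedW (fun i => c ord0 i) (fun i => spanW (v i)).
  congr W; apply: funext => x; under eq_bigr do rewrite mulrBr.
  rewrite sumrB -[RHS]subr0; congr (_ - _).
  under eq_bigr do rewrite mulr_sumr; rewrite exchange_big big1 // => j _.
  under eq_bigr do rewrite mulrA; by rewrite -mulr_suml coef_cancel mul0r.
by apply/rowP => i; rewrite mxE; exact: (indep_v (fun i => c ord0 i) Wc).
Qed.

Lemma indep_mod_le_card m : indep_mod W m -> (m <= #|I|)%N.
Proof.
apply: (@indep_mod_le_span _ (fun j x => (j == x)%:R)) => f; exists f.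
move: lincomb_closed0; congr W; apply: funext => x.
rewrite (bigD1 x) //= eqxx mulr1 big1 ?addr0 ?subrr // => j /negbTE ->.
by rewrite mulr0.
Qed.

Lemma quot_dim_le_span (J : finType) (w : J -> I -> F) :
  spans_mod w -> (quot_dim W <= #|J|)%N.
Proof.
move=> spanW; apply/bigmax_leqP => m /asboolP.
exact: indep_mod_le_span.
Qed.

Lemma max_indep_mod_spans c (u : 'I_c -> I -> F) :
  (forall a, W (fun x => \sum_j a j * u j x) -> forall j, a j = 0) ->
  ~ indep_mod W c.+1 -> spans_mod u.
Proof.
move=> indep_u not_indep f.
pose v (i : 'I_c.+1) := if unlift ord_max i is Some j then u j else f.
have [a [Wa [i nz_ai]]] : exists a : 'I_c.+1 -> F,
    W (fun x => \sum_i a i * v i x) /\ exists i, a i != 0.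
  apply: contrapT => none; apply: not_indep; exists v => a Wa i.
  apply/eqP/contraT => nz_ai; exfalso.
  by apply: none; exists a; split; last exists i.
have va x : \sum_i a i * v i x =
    a ord_max * f x + \sum_j a (lift ord_max j) * u j x.
  by rewrite (bigD1_ord ord_max) //= /v unlift_none; under eq_bigr do rewrite liftK.
have [b0|nz_b] := eqVneq (a ord_max) 0.
  have Wu : W (fun x => \sum_j a (lift ord_max j) * u j x).
    by move: Wa; congr W; apply: funext => x; rewrite va b0 mul0r add0r.
  move: nz_ai; case: (unliftP ord_max i) => [j ->|->]; last by rewrite b0 eqxx.
  by rewrite (indep_u _ Wu j) eqxx.
exists (fun j => - (a (lift ord_max j) / a ord_max)).
have := closedW (fun _ : 'I_1 => (a ord_max)^-1) (fun _ => Wa).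
congr W; apply: funext => x; rewrite big_ord1 va mulrDr mulrA mulVf // mul1r.
rewrite mulr_sumr -sumrN; congr (_ + _); apply: eq_bigr => j _.
by rewrite mulNr opprK mulrA [_^-1 * _]mulrC.
Qed.

Lemma indep_mod_le_quot_dim m : indep_mod W m -> (m <= quot_dim W)%N.
Proof.
move=> indep_m; have lt_m : (m < #|I|.+1)%N by rewrite ltnS indep_mod_le_card.
by apply: (leq_bigmax_cond (Ordinal lt_m)); apply/asboolP.
Qed.

Lemma quot_dim_spans : exists u : 'I_(quot_dim W) -> I -> F, spans_mod u.
Proof.
have indep0 : (0 < #|[pred m : 'I_#|I|.+1 | `[< indep_mod W m >]]|)%N.
  apply/card_gt0P; exists ord0; rewrite inE; apply/asboolP.
  by exists (fun _ _ => 0) => ? _ [].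
have [m /[!inE] /asboolP[u indep_u] dimE] := eq_bigmax_cond val indep0.
have dimW : quot_dim W = m := dimE.
rewrite dimW; exists u; apply: max_indep_mod_spans => // /indep_mod_le_quot_dim.
by rewrite dimW ltnn.
Qed.

End QuotientDimension.

Section GradedComponents.
Variables (F : fieldType) (A : lmodType F) (mul : A -> A -> A) (n : nat).
Variables (A0 A1 : A -> Prop) (sh : A -> A).

Lemma eval_P_lincomb (J : finType) (c : J -> F) (f : J -> 'S_n -> F) x :
  eval_P mul (fun s => \sum_j c j * f j s) x = \sum_j c j *: eval_P mul (f j) x.
Proof.
rewrite /eval_P; under eq_bigr do rewrite scaler_suml.
rewrite exchange_big; apply: eq_bigr => j _; rewrite scaler_sumr.
by apply: eq_bigr => s _; rewrite scalerA.
Qed.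

Lemma eval_Pgrs_lincomb (J : finType) (c : J -> F) (f : J -> grs_index n -> F) x :
  eval_Pgrs mul (fun p => \sum_j c j * f j p) x =
  \sum_j c j *: eval_Pgrs mul (f j) x.
Proof.
rewrite /eval_Pgrs; under eq_bigr do rewrite scaler_suml.
rewrite exchange_big; apply: eq_bigr => j _; rewrite scaler_sumr.
by apply: eq_bigr => p _; rewrite scalerA.
Qed.

Lemma lincomb_closed_id_P : lincomb_closed (@is_id_P F A n mul).
Proof.
move=> J c f id_f x; rewrite eval_P_lincomb big1 // => j _.
by rewrite id_f scaler0.
Qed.

Lemma lincomb_closed_id_Pgrs : lincomb_closed (@is_id_Pgrs F A n mul A0 A1 sh).
Proof.
move=> J c f id_f x kind_x; rewrite eval_Pgrs_lincomb big1 // => j _.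
by rewrite id_f // scaler0.
Qed.

Definition grs_component (t : {ffun 'I_n -> 'I_4}) (g : 'S_n -> F) :
    grs_index n -> F :=
  fun p => if p.2 == t then g p.1 else 0.

Lemma eval_Pgrs_component t g x :
  eval_Pgrs mul (grs_component t g) x = eval_P mul g (fun i => x (t i) i).
Proof.
rewrite /eval_Pgrs big_pairE; apply: eq_bigr => s _.
rewrite (bigD1 t) //= big1 ?addr0; first by rewrite /grs_component /= eqxx.
by move=> t' /negbTE neq_t; rewrite /grs_component /= neq_t scale0r.
Qed.

Lemma id_Pgrs_component t g :
  is_id_P mul g -> is_id_Pgrs mul A0 A1 sh (grs_component t g).
Proof. by move=> id_g x _; rewrite eval_Pgrs_component id_g. Qed.

Lemma grs_component_lincomb t (J : finType) (a : J -> F) (g : J -> 'S_n -> F) p :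
  \sum_j a j * grs_component t (g j) p =
  grs_component t (fun s => \sum_j a j * g j s) p.
Proof.
by rewrite /grs_component; case: ifP => // _; rewrite big1 // => j _; rewrite mulr0.
Qed.

Lemma sum_grs_component (g : {ffun 'I_n -> 'I_4} -> 'S_n -> F) p :
  \sum_t grs_component t (g t) p = g p.2 p.1.
Proof.
rewrite (bigD1 p.2) //= /grs_component eqxx big1 ?addr0 // => t.
by rewrite eq_sym => /negbTE ->.
Qed.

Lemma grs_component_spans (J : finType) (u : J -> 'S_n -> F) :
  spans_mod (@is_id_P F A n mul) u ->
  spans_mod (@is_id_Pgrs F A n mul A0 A1 sh)
    (fun q : {ffun 'I_n -> 'I_4} * J => grs_component q.1 (u q.2)).
Proof.
move=> span_u f.
have [a id_a] := fin_all_exists (fun t => span_u (fun s => f (s, t))).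
exists (fun q => a q.1 q.2).
have := lincomb_closed_id_Pgrs (fun _ => 1) (fun t => id_Pgrs_component t (id_a t)).
congr is_id_Pgrs; apply: funext => -[s t].
under eq_bigr do rewrite mul1r; rewrite sum_grs_component /=; congr (_ - _).
rewrite big_pairE /=.
by under [RHS]eq_bigr do rewrite grs_component_lincomb; rewrite sum_grs_component.
Qed.

End GradedComponents.

Theorem lemma2p2 (F : fieldType) (A : lmodType F) (mul : A -> A -> A)
    (A0 A1 : A -> Prop) (sh : A -> A) (super : bool) :
  [pchar F] =i pred0 ->
  is_sharp_superalgebra mul A0 A1 sh super ->
  forall n : nat, (1 <= n)%N ->
    (codim_grs n mul A0 A1 sh <= 4 ^ n * codim n mul)%N.
Proof.
move=> _ _ n _.
have [u span_u] := quot_dim_spans (@lincomb_closed_id_P F A mul n).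
have := quot_dim_le_span (@lincomb_closed_id_Pgrs F A mul n A0 A1 sh)
  (grs_component_spans A0 A1 sh span_u).
by rewrite card_prod card_ffun !card_ord.
Qed.
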